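(* Let $G$ be a graph and let $H$ be an induced subdivision of the $1$-pan in $G$ having the minimum number of vertices among all induced subdivisions of the $1$-pan in $G$. Write $H=(u,C)$, where $u$ is the vertex of degree $1$ of $H$ and $C$ is the cycle of $H$. If $|V(C)|\ge 5$, then every vertex of $V(G)\setminus V(H)$ has at most one neighbor in $V(C)$.
   Context: All graphs are finite and simple. An induced subdivision of a graph $F$ in $G$ is an induced subgraph of $G$ isomorphic to a graph obtained from $F$ by repeatedly replacing edges by paths of length $2$ through new vertices. The $1$-pan is the graph obtained from a triangle by adding a new vertex adjacent to exactly one vertex of the triangle; an induced subdivision of it consists of an induced cycle $C$ and one further vertex $u$ adjacent to exactly one vertex of $C$. *)

From mathcomp Require Import all_boot.
Set Implicit Arguments. Unset Strict Implicit. Unset Printing Implicit Defensive.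

(* A simple graph: vertex type T : finType, adjacency e : rel T that is
   symmetric and irreflexive (these are hypotheses of the theorem). *)

Definition induced_cycle (T : finType) (e : rel T) (c : seq T) : bool :=
  [&& uniq c, 3 <= size c &
      all (fun x => all (fun y => e x y == (y == next c x) || (x == next c y)) c) c].

Definition pan_subdiv (T : finType) (e : rel T) (u : T) (c : seq T) : bool :=
  [&& induced_cycle e c, u \notin c & count (e u) c == 1].

Definition pan_size (T : finType) (c : seq T) : nat := (size c).+1.

From mathcomp Require Import all_boot zify.
Set Implicit Arguments. Unset Strict Implicit. Unset Printing Implicit Defensive.

(* Let v be a vertex outside H = (u, c) with two neighbours on c; each case
   yields a 1-pan with fewer vertices than H.
   If v sees all of c, take the neighbour c_j of u: when u ~ v the triangle
   u v c_j has pendant c_(j+-2), otherwise the triangle v c_j c_(j+-1) has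
   pendant u.  If v misses some vertex of c, look at two neighbours of v at
   minimal distance g along c.  For g = 1 the end of the run of neighbours
   gives a triangle v c_(k-2) c_(k-1) with pendant c_k.  For g >= 2 the arc
   between them closed through v is an induced cycle of length g + 2, with
   pendant the vertex of c just before the arc; minimality forces
   2g <= |c|, so g + 2 < |c| once |c| >= 5. *)

Definition cycle_adj (n i j : nat) : bool :=
  [|| j == i.+1, i == j.+1, (i == 0) && (j == n.-1) | (j == 0) && (i == n.-1)].

Lemma next_nth_uniq (T : eqType) (x0 : T) s i : uniq s -> i < size s ->
  next s (nth x0 s i) = nth x0 s (if i.+1 < size s then i.+1 else 0).
Proof.
move=> s_uniq lt_i; rewrite next_nth mem_nth // index_uniq //.
case: s s_uniq lt_i => [|y s] //= _ lt_i.
by case: ltnP => [lt_i1|le_s]; [apply: set_nth_default | rewrite nth_default //; lia].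
Qed.

Lemma induced_cycle_nthP (T : finType) (e : rel T) (x0 : T) (s : seq T) :
  reflect [/\ uniq s, 2 < size s & forall i j, i < size s -> j < size s ->
             e (nth x0 s i) (nth x0 s j) = cycle_adj (size s) i j]
          (induced_cycle e s).
Proof.
have adjE i j : uniq s -> 2 < size s -> i < size s -> j < size s ->
    (nth x0 s j == next s (nth x0 s i)) || (nth x0 s i == next s (nth x0 s j))
    = cycle_adj (size s) i j.
  move=> s_uniq s_gt2 lt_i lt_j; rewrite !next_nth_uniq //.
  have lt_succ k : k < size s -> (if k.+1 < size s then k.+1 else 0) < size s.
    by case: ifP; lia.
  rewrite !nth_uniq ?lt_succ //.
  rewrite /cycle_adj; move: (size s) s_gt2 lt_i lt_j => m s_gt2 lt_i lt_j.
  by case: ifP; case: ifP; lia.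
apply: (iffP and3P) => [[s_uniq s_gt2 adj] | [s_uniq s_gt2 adj]]; split=> //.
  move=> i j lt_i lt_j; rewrite -adjE //; apply/eqP.
  by move/(all_nthP x0): adj => /(_ i lt_i) /(all_nthP x0) /(_ j lt_j).
apply/(all_nthP x0) => i lt_i; apply/(all_nthP x0) => j lt_j.
by rewrite adjE // adj.
Qed.

Lemma induced_cycle_rot (T : finType) (e : rel T) k (s : seq T) :
  induced_cycle e s -> induced_cycle e (rot k s).
Proof.
case/and3P=> s_uniq s_gt2 adj; rewrite /induced_cycle rot_uniq size_rot s_uniq s_gt2.
apply/allP=> x; rewrite mem_rot => sx; apply/allP=> y; rewrite mem_rot => sy.
by rewrite !next_rot //; move/allP: adj => /(_ x sx) /allP /(_ y sy).
Qed.

Lemma nth_rot (T : Type) (x0 : T) s k i : k <= size s -> i < size s ->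
  nth x0 (rot k s) i = nth x0 s (if i + k < size s then i + k else i + k - size s).
Proof.
move=> le_k lt_i; rewrite /rot nth_cat size_drop.
case: ifP => [lt_ik | ge_ik]; first by rewrite ifT ?nth_drop 1?addnC //; lia.
by rewrite ifF ?nth_take; [congr nth | | ]; lia.
Qed.

Lemma all_rot (T : Type) k (s : seq T) (a : pred T) : all a (rot k s) = all a s.
Proof. by apply/negb_inj; rewrite -!has_predC has_rot. Qed.

Lemma count_gt1P (T : Type) (x0 : T) (a : pred T) s :
  reflect (exists i j, [/\ i < j, j < size s, a (nth x0 s i) & a (nth x0 s j)])
          (1 < count a s).
Proof.
elim: s => [|x s IHs] /=; first by right=> -[i [j []]].
case ax: (a x) => /=; last first.
  apply: (iffP IHs) => -[i [j [lt_ij lt_j ai aj]]]; first by exists i.+1, j.+1.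
  case: i lt_ij ai => [|i] lt_ij ai; first by rewrite ax in ai.
  by case: j lt_ij lt_j aj => // j; exists i, j.
rewrite ltnS -has_count.
apply: (iffP (has_nthP x0)) => [[j lt_j aj] | [i [j [lt_ij lt_j ai aj]]]].
  by exists 0, j.+1.
by case: j lt_ij lt_j aj => // j _ lt_j aj; exists j.
Qed.

Lemma count_eq1 (T : Type) (x0 : T) (a : pred T) s k : k < size s ->
  (forall i, i < size s -> a (nth x0 s i) = (i == k)) -> count a s = 1.
Proof.
elim: s k => [|x s IHs] [|k] //= lt_k a_nth.
  rewrite (a_nth 0) //; apply/eqP; rewrite eqSS -leqn0 leqNgt -has_count.
  by apply/(has_nthP x0) => -[j lt_j aj]; have := a_nth j.+1 lt_j; rewrite aj.
by rewrite (a_nth 0) // (IHs k) // => i lt_i; apply: (a_nth i.+1).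
Qed.

Section MinimalPan.

Variables (T : finType) (e : rel T) (x0 : T) (n : nat).
Hypotheses (e_sym : symmetric e) (e_irr : irreflexive e).
Hypothesis pan_min : forall p d, pan_subdiv e p d -> n <= size d.

(* [size s] occurs both at the [finType] and at the [eqType] view of [T];
   [lia] would take these convertible terms for distinct atoms. *)
Local Ltac lia_size s := have : size (s : seq (T : eqType)) = size s by []; lia.

Lemma triangle_pan_subdiv p x y z : uniq [:: p; x; y; z] -> e x y -> e y z -> e x z ->
  e p x + e p y + e p z = 1 -> pan_subdiv e p [:: x; y; z].
Proof.
rewrite /= !inE !negb_or => /and4P [/and3P [px py pz] /andP [xy xz] yz _].
move=> exy eyz exz cnt; apply/and3P; split.
- apply/(induced_cycle_nthP _ x); split=> //=; first by rewrite !inE !negb_or xy xz yz.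
  case=> [|[|[|i]]] [|[|[|j]]] //= _ _;
    by rewrite ?e_irr // ?(e_sym y x) ?(e_sym z x) ?(e_sym z y).
- by rewrite !inE !negb_or px py pz.
- by rewrite /= addn0 addnA cnt.
Qed.

Lemma arc_pan_subdiv (c : seq T) (v : T) g :
  induced_cycle e c -> v \notin c -> 0 < g -> g.+2 < size c ->
  e v (nth x0 c 0) -> e v (nth x0 c g) -> (forall k, 0 < k < g -> ~~ e v (nth x0 c k)) ->
  ~~ e v (nth x0 c (size c).-1) ->
  pan_subdiv e (nth x0 c (size c).-1) (v :: take g.+1 c).
Proof.
move=> c_cyc vNc g_gt0 g_lt v0 vg v_mid vNl.
have /(induced_cycle_nthP _ x0) [c_uniq _ c_adj] := c_cyc.
have size_d : size (v :: take g.+1 c) = g.+2 by rewrite /= size_take ifT //; lia.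
have nth_d k : k <= g -> nth x0 (v :: take g.+1 c) k.+1 = nth x0 c k.
  by move=> le_kg; rewrite /= nth_take.
have v_arc k : k <= g -> e v (nth x0 c k) = (k == 0) || (k == g).
  move=> le_kg; have [-> | k_gt0] := posnP k; first by rewrite v0.
  have [-> | ne_kg] := eqVneq k g; first by rewrite vg orbT.
  by rewrite (negbTE (v_mid k _)) ?(negbTE ne_kg) ?orbF //; lia.
apply/and3P; split.
- apply/(induced_cycle_nthP _ x0); rewrite size_d; split=> //.
    by rewrite /= take_uniq // andbT; apply: contra vNc; apply: mem_take.
  case=> [|i] [|j] lt_i lt_j; first by rewrite e_irr.
  + by rewrite nth_d ?v_arc /cycle_adj; lia.
  + by rewrite e_sym nth_d ?v_arc /cycle_adj; lia.
  + by rewrite !nth_d ?c_adj /cycle_adj; lia.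
- rewrite inE negb_or (memPn vNc) ?mem_nth //=; last lia.
  apply/negP => /(nthP x0) [k]; rewrite size_take ifT; last lia_size c.
  by move=> lt_k; rewrite nth_take // => /eqP; rewrite nth_uniq //; lia_size c.
- apply/eqP/(count_eq1 (x0 := x0) (k := 1)); rewrite size_d // => -[|i] lt_i.
    by rewrite /= e_sym (negbTE vNl).
  by rewrite nth_d ?c_adj /cycle_adj; lia_size c.
Qed.

Lemma consecutive_neighbours_all (c : seq T) (v : T) : 3 < n -> induced_cycle e c ->
  size c = n -> v \notin c -> e v (nth x0 c 0) -> e v (nth x0 c 1) -> all (e v) c.
Proof.
move=> n_gt3 c_cyc size_c vNc v0 v1; apply: contraT => v_some.
have /(induced_cycle_nthP _ x0) [c_uniq _ c_adj] := c_cyc.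
have ex_far : exists k, (k < size c) && ~~ e v (nth x0 c k).
  by move: v_some; rewrite -has_predC => /(has_nthP x0) [k lt_k vNk]; exists k; rewrite lt_k.
case: (ex_minnP ex_far) => k /andP [lt_k vNk] k_min.
have v_before i : i < k -> e v (nth x0 c i).
  move=> lt_ik; apply/negPn/negP => vNi.
  by have := k_min i; rewrite vNi andbT => /(_ (ltn_trans lt_ik lt_k)); lia.
have k_gt1 : 1 < k.
  by case: k {k_min v_before} lt_k vNk => [|[|k]] //; rewrite ?v0 ?v1.
suff /pan_min : pan_subdiv e (nth x0 c k) [:: v; nth x0 c k.-2; nth x0 c k.-1].
  by move=> /=; lia.
apply: triangle_pan_subdiv; rewrite ?v_before ?c_adj /cycle_adj //; try lia_size c.
- rewrite /= !inE !negb_or !nth_uniq ?(memPn vNc) ?mem_nth //; try lia_size c.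
  by rewrite !(eq_sym v) !(memPn vNc) ?mem_nth //; lia_size c.
- by rewrite e_sym (negbTE vNk); lia_size c.
Qed.

Lemma pan_no_complete_vertex (u : T) (c : seq T) (v : T) : 3 < n -> pan_subdiv e u c ->
  size c = n -> v \notin c -> v != u -> ~~ all (e v) c.
Proof.
move=> n_gt3 /and3P [c_cyc uNc /eqP cnt_u] size_c vNc vNu.
apply/negP => /(all_nthP x0) v_all.
have /(induced_cycle_nthP _ x0) [c_uniq _ c_adj] := c_cyc.
have [j lt_j uj] : exists2 j, j < size c & e u (nth x0 c j).
  by apply/(has_nthP x0); rewrite has_count cnt_u.
have u_only k : k < size c -> e u (nth x0 c k) = (k == j).
  move=> lt_k; have [-> // | ne_kj] := eqVneq k j; apply/negP => uk.
  suff : 1 < count (e u) c by rewrite cnt_u.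
  apply/(count_gt1P x0); case: (ltngtP k j) => [lt_kj | lt_jk | eq_kj].
  - by exists k, j.
  - by exists j, k.
  - by rewrite eq_kj eqxx in ne_kj.
have nth_neq x i : x \notin c -> i < size c -> (nth x0 c i == x) = false.
  by move=> xNc lt_i; apply: contraNF xNc => /eqP <-; rewrite mem_nth.
case uv : (e u v).
- pose q := if j.+2 < size c then j.+2 else j - 2.
  suff /pan_min : pan_subdiv e (nth x0 c q) [:: u; v; nth x0 c j] by move=> /=; lia.
  apply: triangle_pan_subdiv; rewrite ?v_all //.
  + rewrite /= !inE !negb_or !(eq_sym v) !(eq_sym u) !(nth_neq u) ?(nth_neq v)
      ?nth_uniq ?vNu //=;
      rewrite /q; case: ifP; lia_size c.
  + rewrite (e_sym _ u) (e_sym _ v) u_only ?v_all ?c_adj /q /cycle_adj //;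
      case: ifP; lia_size c.
- pose r := if j.+1 < size c then j.+1 else j.-1.
  suff /pan_min : pan_subdiv e u [:: v; nth x0 c j; nth x0 c r] by move=> /=; lia.
  apply: triangle_pan_subdiv; rewrite ?v_all ?c_adj /r /cycle_adj //;
    try by case: ifP; lia_size c.
  + rewrite /= !inE !negb_or !(eq_sym v) !(eq_sym u) !(nth_neq u) ?(nth_neq v)
      ?nth_uniq ?vNu //=;
      case: ifP; lia_size c.
  + by rewrite uv !u_only //; case: ifP; lia_size c.
Qed.

Lemma two_neighbours_all (v : T) g : 4 < n -> forall c : seq T, induced_cycle e c ->
  size c = n -> v \notin c -> 0 < g < n -> e v (nth x0 c 0) -> e v (nth x0 c g) ->
  all (e v) c.
Proof.
move=> n_gt4; elim/ltn_ind: g => g IHg c c_cyc size_c vNc g_bnd v0 vg.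
(* A pair of neighbours at distance h < g anywhere on c, rotated to 0 and h. *)
have IHrot k h : k < n -> 0 < h < g -> e v (nth x0 c k) ->
    e v (nth x0 c (if h + k < n then h + k else h + k - n)) -> all (e v) c.
  move=> lt_k h_bnd vk vhk; rewrite -(all_rot k); apply: (IHg h).
  - lia.
  - exact: induced_cycle_rot.
  - by rewrite size_rot.
  - by rewrite mem_rot.
  - lia.
  - by rewrite nth_rot size_c ?add0n ?lt_k //; lia.
  - by rewrite nth_rot size_c //; lia.
have [g1 | g_gt1] : g = 1 \/ 1 < g by lia.
  by rewrite g1 in vg; apply: consecutive_neighbours_all => //; lia.
apply: contraT => v_some.
have v_mid k : 0 < k < g -> ~~ e v (nth x0 c k).
  by move=> k_bnd; apply: contra v_some => vk; apply: (IHg k) => //; lia.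
have vNl : ~~ e v (nth x0 c n.-1).
  apply: contra v_some => vl; apply: (IHrot n.-1 1) => //; first lia.
  by rewrite add1n prednK ?ltnn ?subnn //; lia.
have g_half : g + g <= n.
  rewrite leqNgt; apply: contra v_some => lt_half.
  by apply: (IHrot g (n - g)); rewrite ?subnK ?ltnn ?subnn //; lia.
suff /pan_min : pan_subdiv e (nth x0 c n.-1) (v :: take g.+1 c).
  by rewrite /= size_take size_c ifT; lia.
by rewrite -size_c; apply: arc_pan_subdiv; rewrite ?size_c //; lia.
Qed.

Lemma neighbours_gt1_all (c : seq T) (v : T) : 4 < n -> induced_cycle e c ->
  size c = n -> v \notin c -> 1 < count (e v) c -> all (e v) c.
Proof.
move=> n_gt4 c_cyc size_c vNc /(count_gt1P x0) [i [j [lt_ij lt_j vi vj]]].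
have lt_i : i < size c by apply: ltn_trans lt_ij lt_j.
rewrite -(all_rot i); apply: (@two_neighbours_all v (j - i)) => //.
- exact: induced_cycle_rot.
- by rewrite size_rot.
- by rewrite mem_rot.
- lia.
- by rewrite nth_rot ?add0n ?lt_i //; lia.
- by rewrite nth_rot ?(ltnW lt_i) ?subnK ?(ltnW lt_ij) ?lt_j //; lia.
Qed.

End MinimalPan.

Theorem mainTheorem13 (T : finType) (e : rel T)
  (e_sym : symmetric e) (e_irr : irreflexive e)
  (u : T) (c : seq T)
  (H : pan_subdiv e u c)
  (Hmin : forall (u' : T) (c' : seq T), pan_subdiv e u' c' ->
            pan_size c <= pan_size c')
  (Hc5 : 5 <= size c) :
  forall v : T, v \notin c -> v != u -> count (e v) c <= 1.
Proof.
move=> v vNc vNu.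
have pan_min p d : pan_subdiv e p d -> size c <= size d by move/Hmin.
have v_not_all : ~~ all (e v) c.
  exact: (pan_no_complete_vertex u e_sym e_irr pan_min (ltnW Hc5) H erefl vNc vNu).
rewrite leqNgt; apply: contra v_not_all.
by apply: (neighbours_gt1_all u e_sym e_irr pan_min Hc5 _ erefl vNc); case/and3P: H.
Qed.
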